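(* For all integers $0\le a<t\le T$, \[ \sum_{b=a}^{t-1}(\gamma\lambda)^{b-a}\,\delta'_{a,b}=G_a^{\lambda\mid t}-g(h_a;\theta_{a-1}), \] where for $a\le b\le T-1$, $\delta'_{a,b}=\frac{\partial L_{b+1}}{\partial h_a}+\gamma\, g(h_{b+1};\theta_b)^\top\frac{\partial h_{b+1}}{\partial h_a}-g(h_b;\theta_{b-1})^\top\frac{\partial h_b}{\partial h_a}$.
   Context: Fix integers $d,p,T\ge1$. Hidden states $h_0,\dots,h_T\in\mathbb{R}^d$ are produced by a recurrent network $h_t=f(x_t,h_{t-1})$ with $f$ differentiable and inputs fixed; losses $L_t=\ell_t(h_t)$, $1\le t\le T$, with $\ell_t$ differentiable. For $0\le s\le\tau\le T$, $\partial h_\tau/\partial h_s\in\mathbb{R}^{d\times d}$ is the Jacobian of $h_\tau$ as a function of $h_s$ through the recursion (identity if $\tau=s$); for $s<\tau$, $\partial L_\tau/\partial h_s\in\mathbb{R}^d$ is the gradient of $L_\tau$ as a function of $h_s$; for $v\in\mathbb{R}^d$, $v^\top\partial h_\tau/\partial h_s$ means $(\partial h_\tau/\partial h_s)^\top v$. Let $g:\mathbb{R}^d\times\mathbb{R}^p\to\mathbb{R}^d$ be any map (the synthesiser), $\gamma,\lambda\in[0,1]$, and let $\theta_{-1},\theta_0,\dots,\theta_{T-1}\in\mathbb{R}^p$ be an arbitrary sequence of weight vectors. Convention $0^0=1$. The $n$-step synthetic gradient, for $k\ge0$, $n\ge1$, $k+n\le T$, is $G_k^{(n)}=\sum_{\tau=1}^{n}\gamma^{\tau-1}\frac{\partial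 L_{k+\tau}}{\partial h_k}+\gamma^n g(h_{k+n};\theta_{k+n-1})^\top\frac{\partial h_{k+n}}{\partial h_k}$, and the interim $\lambda$-weighted synthetic gradient, for $0\le k<H\le T$, is $G_k^{\lambda\mid H}=(1-\lambda)\sum_{n=1}^{H-k-1}\lambda^{n-1}G_k^{(n)}+\lambda^{H-k-1}G_k^{(H-k)}$. An empty sum is zero. *)

From HB Require Import structures.
From mathcomp Require Import all_boot all_order all_algebra.
From mathcomp Require Import all_classical all_reals.
From mathcomp Require Import topology normedtype derive.
Set Implicit Arguments. Unset Strict Implicit. Unset Printing Implicit Defensive.
Import Order.TTheory GRing.Theory Num.Theory.
Import numFieldNormedType.Exports.
Local Open Scope ring_scope.

Section RNN.
Variables (R : realType) (d : nat) (X : Type).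
Variable f : X -> 'rV[R]_d -> 'rV[R]_d.   (* h_t = f (x t) h_{t-1} *)
Variable x : nat -> X.

(* flow s n h = h_{s+n} as a function of h_s = h, through the recursion. *)
Fixpoint flow (s n : nat) (h : 'rV[R]_d) : 'rV[R]_d :=
  match n with
  | 0 => h
  | n'.+1 => f (x (s + n'.+1)) (flow s n' h)
  end.

(* Jacobian (d x d matrix, usual convention: rows = outputs) of h_tau as a
   function of h_s, evaluated at hs.  The library's 'J is the matrix of the
   differential acting on row vectors (v *m 'J = dF(v)), i.e. the transpose. *)
Definition jac (s tau : nat) (hs : 'rV[R]_d) : 'M[R]_d :=
  (jacobian (flow s (tau - s)) hs)^T.

Definition grad (F : 'rV[R]_d -> R^o) (p : 'rV[R]_d) : 'rV[R]_d :=
  \row_i ('d F p) (delta_mx 0 i).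

Definition dL (ell : nat -> 'rV[R]_d -> R^o) (s tau : nat) (hs : 'rV[R]_d)
  : 'rV[R]_d := grad (fun h => ell tau (flow s (tau - s) h)) hs.

(* v^T (dh_tau/dh_s), as a row vector:  (J^T v)^T = v *m J. *)
Definition vJ (v : 'rV[R]_d) (s tau : nat) (hs : 'rV[R]_d) : 'rV[R]_d :=
  v *m jac s tau hs.

Variables (p : nat) (g : 'rV[R]_d -> 'rV[R]_p -> 'rV[R]_d).
Variable theta : int -> 'rV[R]_p.          (* theta_{-1}, theta_0, ... *)
Variables (ell : nat -> 'rV[R]_d -> R^o) (h : nat -> 'rV[R]_d) (gamma lambda : R).

Definition gk (k : nat) : 'rV[R]_d := g (h k) (theta (k%:Z - 1)).

Definition Gn (k n : nat) : 'rV[R]_d :=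
  \sum_(1 <= tau < n.+1) gamma ^+ (tau - 1) *: dL ell k (k + tau) (h k)
  + gamma ^+ n *: vJ (gk (k + n)) k (k + n) (h k).

Definition Glam (k H : nat) : 'rV[R]_d :=
  (1 - lambda) *: \sum_(1 <= n < H - k) lambda ^+ (n - 1) *: Gn k n
  + lambda ^+ (H - k - 1) *: Gn k (H - k).

Definition delta' (a b : nat) : 'rV[R]_d :=
  dL ell a b.+1 (h a) + gamma *: vJ (gk b.+1) a b.+1 (h a)
  - vJ (gk b) a b (h a).

End RNN.

From HB Require Import structures.
From mathcomp Require Import all_boot all_order all_algebra.
From mathcomp Require Import all_classical all_reals.
From mathcomp Require Import topology normedtype derive.
Import Order.TTheory GRing.Theory Num.Theory.
Import numFieldNormedType.Exports.
(* Nothing about the network enters: the identity is a telescoping sum.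
   Consecutive n-step gradients differ by a single delta' term,
   G_a^(n+1) - G_a^(n) = gamma^n delta'_(a,a+n), the lambda-weighted gradient
   G_a^(lambda|a+N) telescopes to G_a^(0) + sum_(n<N) lambda^n (G_a^(n+1) - G_a^(n)),
   and G_a^(0) = g(h_a; theta_(a-1)) because dh_a/dh_a is the identity. *)

Set Implicit Arguments. Unset Strict Implicit. Unset Printing Implicit Defensive.
Local Open Scope ring_scope.

Section LambdaReturn.
Variables (K : comPzRingType) (M : lmodType K) (l : K) (G : nat -> M).

Definition lambda_return (N : nat) : M :=
  (1 - l) *: \sum_(1 <= n < N) l ^+ (n - 1) *: G n + l ^+ (N - 1) *: G N.

Lemma lambda_return1 : lambda_return 1 = G 1.
Proof. by rewrite /lambda_return big_geq // scaler0 add0r scale1r. Qed.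

Lemma lambda_returnS (N : nat) :
  lambda_return N.+2 = lambda_return N.+1 + l ^+ N.+1 *: (G N.+2 - G N.+1).
Proof.
rewrite /lambda_return big_nat_recr //= !subn1 /=.
set S := \sum_(_ <= _ < _) _.
rewrite scalerDr scalerA mulrBl mul1r -exprS [_ *: G N.+1]scalerBl scalerBr.
by rewrite !addrA [in RHS]addrAC.
Qed.

Lemma lambda_return_telescope (N : nat) : (0 < N)%N ->
  lambda_return N = G 0 + \sum_(n < N) l ^+ n *: (G n.+1 - G n).
Proof.
case: N => // N _; elim: N => [|N IH].
  by rewrite lambda_return1 big_ord1 scale1r addrC subrK.
by rewrite lambda_returnS IH [in RHS]big_ord_recr addrA.
Qed.

End LambdaReturn.

Lemma jacobian_id (R : numFieldType) (n : nat) (v : 'rV[R]_n) :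
  jacobian id v = 1%:M.
Proof.
apply/row_matrixP => i; rewrite !rowE mul_rV_lin1 mulmx1.
by rewrite (_ : 'd id v = id :> ('rV[R]_n -> 'rV[R]_n)) // diff_val.
Qed.

Section SyntheticGradients.
Variables (R : realType) (d p : nat) (X : Type).
Variables (f : X -> 'rV[R]_d -> 'rV[R]_d) (x : nat -> X).
Variables (g : 'rV[R]_d -> 'rV[R]_p -> 'rV[R]_d) (theta : int -> 'rV[R]_p).
Variables (ell : nat -> 'rV[R]_d -> R^o) (h : nat -> 'rV[R]_d) (gamma : R).

Lemma vJ_refl (v : 'rV[R]_d) (s : nat) (hs : 'rV[R]_d) : vJ f x v s s hs = v.
Proof. by rewrite /vJ /jac subnn jacobian_id trmx1 mulmx1. Qed.

Let G := Gn f x g theta ell h gamma.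

Lemma Gn0 (a : nat) : G a 0 = gk g theta h a.
Proof. by rewrite /G /Gn big_geq // add0r expr0 scale1r addn0 vJ_refl. Qed.

Lemma GnS_sub (a n : nat) :
  G a n.+1 - G a n = gamma ^+ n *: delta' f x g theta ell h gamma a (a + n).
Proof.
rewrite /G /Gn big_nat_recr //= subn1 /= addnS /delta'.
set S := \sum_(1 <= i < n.+1) _.
by rewrite -(addrA S) (addrC S) addrKA scalerBr scalerDr scalerA -exprSr.
Qed.

End SyntheticGradients.

Theorem lemma4 (R : realType) (d p T : nat) (X : Type)
  (f : X -> 'rV[R]_d -> 'rV[R]_d) (x : nat -> X)
  (ell : nat -> 'rV[R]_d -> R^o) (h : nat -> 'rV[R]_d)
  (g : 'rV[R]_d -> 'rV[R]_p -> 'rV[R]_d) (theta : int -> 'rV[R]_p)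
  (gamma lambda : R) :
  (0 < d)%N -> (0 < p)%N -> (0 < T)%N ->
  (forall t (v : 'rV[R]_d), differentiable (f (x t)) v) ->
  (forall t (v : 'rV[R]_d), differentiable (ell t) v) ->
  (forall t, (1 <= t <= T)%N -> h t = f (x t) (h t.-1)) ->
  0 <= gamma <= 1 -> 0 <= lambda <= 1 ->
  forall a t : nat, (a < t <= T)%N ->
    \sum_(a <= b < t) (gamma * lambda) ^+ (b - a) *:
        delta' f x g theta ell h gamma a b
    = Glam f x g theta ell h gamma lambda a t
      - gk g theta h a.
Proof.
move=> _ _ _ _ _ _ _ _ a t /andP[lt_at _].
have -> : Glam f x g theta ell h gamma lambda a t =
          lambda_return lambda (Gn f x g theta ell h gamma a) (t - a) by [].
rewrite lambda_return_telescope ?subn_gt0 // Gn0 addrC addKr.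
rewrite -{1}(add0n a) big_addn big_mkord; apply: eq_bigr => n _.
by rewrite GnS_sub scalerA exprMn addnK addnC mulrC.
Qed.
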